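(* Let $(E\to M,\rho,\langle\cdot,\cdot\rangle,[\cdot,\cdot])$ be a Courant algebroid, $\mathcal{G}$ a generalized metric and $\operatorname{div}$ a divergence operator on $E$, and let $D$ be a metric generalized connection with divergence $\operatorname{div}$ and pure-type torsion, with total generalized Ricci curvature $\mathrm{Ric}$. Then $\mathrm{Ric}(a,\mathcal{G}b)=-\mathrm{Ric}(\mathcal{G}a,b)$ for all $a,b\in\Gamma(E)$. In particular, $\mathrm{Ric}'_{\mathrm{GF}}$ is skew-symmetric if and only if $\mathrm{Ric}$ is symmetric.
   Context: A Courant algebroid $(E\to M,\rho,\langle\cdot,\cdot\rangle,[\cdot,\cdot])$: vector bundle $E$ with nondegenerate symmetric form, anchor $\rho:E\to TM$ and bracket on $\Gamma(E)$ with $[a,[b,c]]=[[a,b],c]+[b,[a,c]]$, $\mathcal{L}_{\rho a}\langle b,c\rangle=\langle[a,b],c\rangle+\langle b,[a,c]\rangle$, $2[a,a]=\rho^*d\langle a,a\rangle$. A generalized connection is a linear $D:\Gamma(E)\to\Gamma(E^*\otimes E)$ with $D(fa)=fDa+\rho^*df\otimes a$ and $\rho^*d\langle a,b\rangle=\langle Da,b\rangle+\langle a,Db\rangle$; $D_ba:=(Da)(b)$, $(Da)^*$ is the adjoint of $b\mapsto D_ba$. Naive curvature $\mathcal{R}_0(a,b)c:=D_aD_bc-D_bD_ac-D_{[a,b]}c$. A generalized metric is a self-adjoint $\mathcal{G}\in\operatorname{End}E$ with $\mathcal{G}^2=1$; $V_\pm=\ker(\mathcal{G}\mp1)$, $x_\pm:=\tfrac12(1\pm\mathcal{G})x$.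 $D$ is metric if it preserves $\Gamma(V_\pm)$. A divergence operator is linear $\operatorname{div}:\Gamma(E)\to C^\infty(M)$ with $\operatorname{div}(fa)=f\operatorname{div}a+\mathcal{L}_{\rho a}f$; $D$ has divergence $\operatorname{div}$ if $\operatorname{div}a=\operatorname{tr}(Da)$. Torsion $T(a,b):=D_ab-D_ba-[a,b]+(Da)^*b\in\Gamma(\wedge^3E^* )$ is of pure type if $T\in\Gamma(\wedge^3V_+\oplus\wedge^3V_-)$. Total curvature $\mathcal{R}(a,b):=\mathcal{R}_0(a_+,b_-)+\mathcal{R}_0(a_-,b_+)$; total generalized Ricci curvature $\mathrm{Ric}(a,b):=\operatorname{tr}(c\mapsto\mathcal{R}(c,a)b)$. $\mathrm{Ric}^\pm_{\mathrm{GF}}(a_\mp,b_\pm)$ is the trace of $V_\pm\to V_\pm$, $c_\pm\mapsto\mathcal{R}_0(c_\pm,a_\mp)b_\pm$, and $\mathrm{Ric}'_{\mathrm{GF}}(a,b):=\mathrm{Ric}^+_{\mathrm{GF}}(a_-,b_+)-\mathrm{Ric}^-_{\mathrm{GF}}(a_+,b_-)$. *)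

(* Algebraic (Serre–Swan style) model of a Courant algebroid:
   A  = algebra of functions C^oo(M) (a commutative algebra over the scalars R),
   V  = Gamma(E), an A-module which is finitely generated projective, witnessed
        by a dual basis (e_i, phi_i), used to define traces;
   vector fields = R-linear derivations of A. *)
From HB Require Import structures.
From mathcomp Require Import all_boot all_order all_algebra.
Set Implicit Arguments. Unset Strict Implicit. Unset Printing Implicit Defensive.
Import Order.TTheory GRing.Theory Num.Theory.
Local Open Scope ring_scope.

Section CourantDefs.
Variables (R : numFieldType) (A : comAlgType R) (V : lmodType A).

Definition Rlinear (T : V -> V) :=
  forall (k : R) (x y : V), T (k%:A *: x + y) = k%:A *: T x + T y.

Definition Alinear (T : V -> V) :=
  forall (f : A) (x y : V), T (f *: x + y) = f *: T x + T y.

Definition Alinear_form (phi : V -> A) :=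
  forall (f : A) (x y : V), phi (f *: x + y) = f * phi x + phi y.

Definition is_vector_field (X : A -> A) :=
  (forall (k : R) (f h : A), X (k *: f + h) = k *: X f + X h) /\
  (forall f h : A, X (f * h) = X f * h + f * X h).

(* dual basis: V is finitely generated projective (sections of a vector bundle) *)
Definition dual_basis (n : nat) (e : 'I_n -> V) (phi : 'I_n -> V -> A) :=
  (forall i, Alinear_form (phi i)) /\
  (forall v : V, v = \sum_(i < n) phi i v *: e i).

Definition trace (n : nat) (e : 'I_n -> V) (phi : 'I_n -> V -> A)
  (T : V -> V) : A := \sum_(i < n) phi i (T (e i)).

(* Courant algebroid structure (g = <.,.>, rho = anchor, br = bracket).
   rho^* df is the element with <rho^* df, c> = rho(c) f. *)
Definition is_Courant (g : V -> V -> A) (rho : V -> A -> A)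
  (br : V -> V -> V) :=
  [/\ (forall a b, g a b = g b a) /\ (forall a, Alinear_form (g a)),
      (forall phi, Alinear_form phi -> exists v, forall w, g v w = phi w) /\
      (forall v, (forall w, g v w = 0) -> v = 0),
      (forall (f : A) a b h, rho (f *: a + b) h = f * rho a h + rho b h) /\
      (forall a, is_vector_field (rho a)),
      (forall a, Rlinear (br a)) /\ (forall c, Rlinear (fun a => br a c)) &
      [/\ forall a b c, br a (br b c) = br (br a b) c + br b (br a c),
          forall a b c, rho a (g b c) = g (br a b) c + g b (br a c) &
          forall a c, g (br a a *+ 2) c = rho c (g a a)]].

Definition is_gen_metric (g : V -> V -> A) (G : V -> V) :=
  [/\ Alinear G, forall a b, g (G a) b = g a (G b) & forall a, G (G a) = a].

Definition pp (G : V -> V) (x : V) : V := (2^-1 : R)%:A *: (x + G x).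
Definition pm (G : V -> V) (x : V) : V := (2^-1 : R)%:A *: (x - G x).

Definition is_divergence (rho : V -> A -> A) (div : V -> A) :=
  (forall (k : R) a b, div (k%:A *: a + b) = k%:A * div a + div b) /\
  (forall (f : A) a, div (f *: a) = f * div a + rho a f).

(* generalized connection; D b a stands for D_b a = (Da)(b) *)
Definition is_gen_connection (g : V -> V -> A) (rho : V -> A -> A)
  (D : V -> V -> V) :=
  [/\ forall a, Alinear (fun b => D b a),
      forall b, Rlinear (D b),
      forall (f : A) a b, D b (f *: a) = f *: D b a + rho b f *: a &
      forall a b c, rho c (g a b) = g (D c a) b + g a (D c b)].

(* metric: preserves Gamma(V_+) and Gamma(V_-) *)
Definition is_metric_conn (G : V -> V) (D : V -> V -> V) :=
  forall c a, G (D c (pp G a)) = D c (pp G a) /\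
              G (D c (pm G a)) = - D c (pm G a).

Definition has_divergence (n : nat) (e : 'I_n -> V) (phi : 'I_n -> V -> A) (D : V -> V -> V) (div : V -> A) :=
  forall a, div a = trace e phi (fun b => D b a).

(* <T(a,b), c> with T(a,b) = D_a b - D_b a - [a,b] + (Da)^* b,
   where <(Da)^* b, c> = <b, D_c a> *)
Definition torsion3 (g : V -> V -> A) (br : V -> V -> V) (D : V -> V -> V)
  (a b c : V) : A :=
  g (D a b - D b a - br a b) c + g b (D c a).

(* T in Gamma(wedge^3 V_+ (+) wedge^3 V_-) *)
Definition pure_type_torsion g br D (G : V -> V) :=
  forall a b c, torsion3 g br D a b c =
    torsion3 g br D (pp G a) (pp G b) (pp G c) +
    torsion3 g br D (pm G a) (pm G b) (pm G c).

Definition R0 (br : V -> V -> V) (D : V -> V -> V) (a b c : V) : V :=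
  D a (D b c) - D b (D a c) - D (br a b) c.

Definition Rtot br D (G : V -> V) (a b c : V) : V :=
  R0 br D (pp G a) (pm G b) c + R0 br D (pm G a) (pp G b) c.

Definition Ric (n : nat) (e : 'I_n -> V) (phi : 'I_n -> V -> A) br D G (a b : V) : A :=
  trace e phi (fun c => Rtot br D G c a b).

(* trace over V_+ (resp. V_-): dual basis (pp e_i, phi_i|V_+) *)
Definition RicGF' (n : nat) (e : 'I_n -> V) (phi : 'I_n -> V -> A) br D G (a b : V) : A :=
  trace e phi (fun c => R0 br D (pp G c) (pm G a) (pp G b)) -
  trace e phi (fun c => R0 br D (pm G c) (pp G a) (pm G b)).

End CourantDefs.

From HB Require Import structures.
From mathcomp Require Import all_boot all_order all_algebra.
From mathcomp Require Import ring.
Import GRing.Theory Num.Theory.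
Local Open Scope ring_scope.
Set Implicit Arguments.
Unset Strict Implicit.

(* Split b = b_+ + b_-.  Of the four pieces of R(c, a) b, the two in which b
   has the "wrong" type have zero trace: T c := R0(c_+, a_-) b_- is
   C^oo(M)-linear in c because <c_+, a_-> = 0, takes values in V_- because D
   is metric, and kills V_-; so with pm the projection onto V_-,
   tr T = tr (pm T) = tr (T pm) = 0.  Hence
   Ric(a, b) = Ric^+(a_-, b_+) + Ric^-(a_+, b_-) while
   Ric'_GF(a, b) = Ric^+(a_-, b_+) - Ric^-(a_+, b_-).  Since G fixes x_+ and
   negates x_-, this gives Ric(a, G b) = - Ric(G a, b) and
   Ric'_GF(a, b) = - Ric(G a, b), from which the equivalence is formal. *)

Section AdditiveMaps.
Variables (U W : zmodType) (f : U -> W).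
Hypothesis fD : {morph f : x y / x + y}.

Lemma add_morph0 : f 0 = 0.
Proof. by apply: (addrI (f 0)); rewrite -fD !addr0. Qed.

Lemma add_morphN : {morph f : x / - x}.
Proof. by move=> x; apply: (addrI (f x)); rewrite -fD !subrr add_morph0. Qed.

End AdditiveMaps.

Section Halves.
Variables (R : numFieldType) (A : comAlgType R) (V : lmodType A).

Lemma natmul2_inj (W : lmodType R) : injective (fun x : W => x *+ 2).
Proof.
move=> x y /(congr1 (fun v => 2^-1 *: v)) /=.
by rewrite -!scaler_nat !scalerA mulVf ?pnatr_eq0 // !scale1r.
Qed.

Lemma halfZ_double (x : V) : (2^-1 : R)%:A *: (x + x) = x.
Proof.
have half_sum : (2^-1 + 2^-1 : R) = 1.
  by rewrite [RHS](splitr 1) mul1r.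
by rewrite scalerDr -!scalerDl half_sum !scale1r.
Qed.

End Halves.

Section LinearMaps.
Variables (R : numFieldType) (A : comAlgType R) (V : lmodType A).

Lemma RlinearD (T : V -> V) : Rlinear T -> {morph T : x y / x + y}.
Proof. by move=> HT x y; have := HT 1 x y; rewrite !scale1r. Qed.

Lemma Alinear_Rlinear (T : V -> V) : Alinear T -> Rlinear T.
Proof. by move=> HT k; apply: HT. Qed.

Lemma AlinearD (T : V -> V) : Alinear T -> {morph T : x y / x + y}.
Proof. by move/Alinear_Rlinear/RlinearD. Qed.

Lemma AlinearZ (T : V -> V) f x : Alinear T -> T (f *: x) = f *: T x.
Proof.
move=> HT; have := HT f x 0.
by rewrite !addr0 (add_morph0 (AlinearD HT)) addr0.
Qed.

Lemma Alinear_sum (T : V -> V) n (F : 'I_n -> A) (v : 'I_n -> V) :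
  Alinear T -> T (\sum_(i < n) F i *: v i) = \sum_(i < n) F i *: T (v i).
Proof.
move=> HT; apply: (big_ind2 (fun x y => T x = y)).
- exact: add_morph0 (AlinearD HT).
- by move=> x1 x2 y1 y2 <- <-; rewrite AlinearD.
- by move=> i _; rewrite AlinearZ.
Qed.

Lemma Alinear_formD (p : V -> A) : Alinear_form p -> {morph p : x y / x + y}.
Proof. by move=> Hp x y; have := Hp 1 x y; rewrite scale1r mul1r. Qed.

Lemma Alinear_formZ (p : V -> A) f x : Alinear_form p -> p (f *: x) = f * p x.
Proof.
move=> Hp; have := Hp f x 0.
by rewrite !addr0 (add_morph0 (Alinear_formD Hp)) addr0.
Qed.

Lemma Alinear_form_sum (p : V -> A) n (F : 'I_n -> A) (v : 'I_n -> V) :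
  Alinear_form p -> p (\sum_(i < n) F i *: v i) = \sum_(i < n) F i * p (v i).
Proof.
move=> Hp; apply: (big_ind2 (fun x y => p x = y)).
- exact: add_morph0 (Alinear_formD Hp).
- by move=> x1 x2 y1 y2 <- <-; rewrite Alinear_formD.
- by move=> i _; rewrite Alinear_formZ.
Qed.

End LinearMaps.

Section Courant.
Variables (R : numFieldType) (A : comAlgType R) (V : lmodType A).
Variables (g : V -> V -> A) (rho : V -> A -> A) (br : V -> V -> V).
Hypothesis HC : is_Courant g rho br.

Lemma gC a b : g a b = g b a.
Proof. by case: HC => [[]]. Qed.

Lemma gDr a : {morph g a : x y / x + y}.
Proof. by case: HC => [[_ Hg]] *; apply: Alinear_formD. Qed.

Lemma gZr a f x : g a (f *: x) = f * g a x.
Proof. by case: HC => [[_ Hg]] *; apply: Alinear_formZ. Qed.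

Lemma gNr a : {morph g a : x / - x}.
Proof. exact: add_morphN (gDr a). Qed.

Lemma gDl a x y : g (x + y) a = g x a + g y a.
Proof. by rewrite !(gC _ a) gDr. Qed.

Lemma gZl a f x : g (f *: x) a = f * g x a.
Proof. by rewrite !(gC _ a) gZr. Qed.

Lemma gNl a x : g (- x) a = - g x a.
Proof. by rewrite !(gC _ a) gNr. Qed.

Lemma courant_eq u v : (forall d, g u d = g v d) -> u = v.
Proof.
case: HC => _ [_ nondeg] _ _ _ Huv; apply/eqP; rewrite -subr_eq0; apply/eqP.
by apply: nondeg => d; rewrite gDl gNl Huv subrr.
Qed.

Lemma anchorD a : {morph rho a : x y / x + y}.
Proof.
case: HC => _ _ [_ /(_ a) [Hlin _]] _ _ x y.
by have := Hlin 1 x y; rewrite !scale1r.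
Qed.

Lemma anchor0 a : rho a 0 = 0.
Proof. exact: add_morph0 (anchorD a). Qed.

Lemma anchorM a x y : rho a (x * y) = rho a x * y + x * rho a y.
Proof. by case: HC => _ _ [_ /(_ a) []]. Qed.

Lemma brDr a : {morph br a : x y / x + y}.
Proof. by case: HC => _ _ _ [/(_ a) /RlinearD]. Qed.

Lemma brDl a : {morph br^~ a : x y / x + y}.
Proof. by case: HC => _ _ _ [_ /(_ a) /RlinearD]. Qed.

Lemma brNr a : {morph br a : x / - x}.
Proof. exact: add_morphN (brDr a). Qed.

Lemma br0l a : br 0 a = 0.
Proof. exact: add_morph0 (brDl a). Qed.

Lemma br_polar u v d : g (br u v) d + g (br v u) d = rho d (g u v).
Proof.
have sq x : g (br x x) d *+ 2 = rho d (g x x).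
  by case: HC => _ _ _ _ [_ _ <-]; rewrite !mulr2n gDl.
have br_add : g (br (u + v) (u + v)) d =
    g (br u u) d + g (br v v) d + (g (br u v) d + g (br v u) d).
  by rewrite !brDl !brDr !gDl; ring.
have g_add : g (u + v) (u + v) = g u u + g v v + (g u v + g u v).
  by rewrite gDl !gDr (gC v u); ring.
apply: natmul2_inj => /=; move: (sq (u + v)).
by rewrite br_add g_add !anchorD -(sq u) -(sq v) !mulrnDl -mulr2n => /addrI.
Qed.

Lemma br_leibniz a f b : br a (f *: b) = f *: br a b + rho a f *: b.
Proof.
apply: courant_eq => c; case: HC => _ _ _ _ [_ invariance _].
apply: (addIr (g (f *: b) (br a c))).
rewrite -invariance gZl anchorM invariance gDl !gZl; ring.
Qed.

Lemma br_leibniz_l x y f :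
  g x y = 0 -> br (f *: x) y = f *: br x y - rho y f *: x.
Proof.
move=> gxy; apply: courant_eq => d.
have skew : g (br x y) d = - g (br y x) d.
  by apply/eqP; rewrite -subr_eq0 opprK br_polar gxy anchor0.
have := br_polar (f *: x) y d.
rewrite gZl gxy mulr0 anchor0 br_leibniz gDl !gZl => /eqP.
by rewrite addr_eq0 => /eqP ->; rewrite gDl gNl !gZl skew; ring.
Qed.

End Courant.

Section Projections.
Variables (R : numFieldType) (A : comAlgType R) (V : lmodType A) (G : V -> V).
Hypotheses (G_lin : Alinear G) (GK : involutive G).

Let GD := AlinearD G_lin.
Let GN := add_morphN GD.

Lemma pp_Alinear : Alinear (pp G).
Proof.
move=> f x y; rewrite /pp GD (AlinearZ _ _ G_lin) addrACA -scalerDr.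
by rewrite !scalerDr !scalerA (mulrC f).
Qed.

Lemma pm_Alinear : Alinear (pm G).
Proof.
move=> f x y; rewrite /pm GD (AlinearZ _ _ G_lin) opprD addrACA.
by rewrite -scalerN -scalerDr !scalerDr !scalerA (mulrC f).
Qed.

Lemma Gpp x : G (pp G x) = pp G x.
Proof. by rewrite /pp (AlinearZ _ _ G_lin) GD GK addrC. Qed.

Lemma Gpm x : G (pm G x) = - pm G x.
Proof. by rewrite /pm (AlinearZ _ _ G_lin) GD GN GK -scalerN opprB. Qed.

Lemma ppG x : pp G (G x) = pp G x.
Proof. by rewrite /pp GK addrC. Qed.

Lemma pmG x : pm G (G x) = - pm G x.
Proof. by rewrite /pm GK -scalerN opprB. Qed.

Lemma pp_add_pm x : pp G x + pm G x = x.
Proof. by rewrite /pp /pm -scalerDr addrACA subrr addr0 halfZ_double. Qed.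

Lemma pp_fix v : G v = v -> pp G v = v.
Proof. by rewrite /pp => ->; rewrite halfZ_double. Qed.

Lemma pm_fix v : G v = v -> pm G v = 0.
Proof. by rewrite /pm => ->; rewrite subrr scaler0. Qed.

Lemma pp_antifix v : G v = - v -> pp G v = 0.
Proof. by rewrite /pp => ->; rewrite subrr scaler0. Qed.

Lemma pm_antifix v : G v = - v -> pm G v = v.
Proof. by rewrite /pm => ->; rewrite opprK halfZ_double. Qed.

End Projections.

Section Trace.
Variables (R : numFieldType) (A : comAlgType R) (V : lmodType A).
Variables (n : nat) (e : 'I_n -> V) (phi : 'I_n -> V -> A).
Hypothesis Hdb : dual_basis e phi.

Let phi_lin i : Alinear_form (phi i). Proof. by case: Hdb. Qed.
Let phiD i := Alinear_formD (phi_lin i).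

Lemma eq_trace (T1 T2 : V -> V) : T1 =1 T2 -> trace e phi T1 = trace e phi T2.
Proof. by move=> eqT; apply: eq_bigr => i _; rewrite eqT. Qed.

Lemma traceD (T1 T2 : V -> V) :
  trace e phi (fun c => T1 c + T2 c) = trace e phi T1 + trace e phi T2.
Proof. by rewrite -big_split; apply: eq_bigr => i _; rewrite phiD. Qed.

Lemma traceN (T : V -> V) : trace e phi (fun c => - T c) = - trace e phi T.
Proof. by rewrite -sumrN; apply: eq_bigr => i _; rewrite (add_morphN (phiD i)). Qed.

Lemma trace_compC (X Y : V -> V) : Alinear X -> Alinear Y ->
  trace e phi (X \o Y) = trace e phi (Y \o X).
Proof.
case: Hdb => _ decomp HX HY.
transitivity (\sum_(i < n) \sum_(j < n) phi j (Y (e i)) * phi i (X (e j))).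
  apply: eq_bigr => i _ /=.
  by rewrite {1}(decomp (Y (e i))) Alinear_sum // Alinear_form_sum.
rewrite exchange_big; apply: eq_bigr => j _ /=.
rewrite [in RHS](decomp (X (e j))) Alinear_sum // Alinear_form_sum //.
by apply: eq_bigr => i _; rewrite mulrC.
Qed.

Lemma trace_proj_eq0 (P T : V -> V) : Alinear P -> Alinear T ->
  (forall c, P (T c) = T c) -> (forall c, T (P c) = 0) -> trace e phi T = 0.
Proof.
move=> HP HT PT TP; rewrite -(eq_trace PT) (trace_compC HP HT).
by apply: big1 => i _ /=; rewrite TP (add_morph0 (phiD i)).
Qed.

End Trace.

Section Connection.
Variables (R : numFieldType) (A : comAlgType R) (V : lmodType A).
Variables (g : V -> V -> A) (rho : V -> A -> A) (D : V -> V -> V).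
Hypothesis HD : is_gen_connection g rho D.

Lemma connDl z : {morph D^~ z : x y / x + y}.
Proof. by case: HD => /(_ z) /AlinearD. Qed.

Lemma connZl f x z : D (f *: x) z = f *: D x z.
Proof. by case: HD => /(_ z) /AlinearZ. Qed.

Lemma conn0l z : D 0 z = 0.
Proof. exact: add_morph0 (connDl z). Qed.

Lemma connNl z : {morph D^~ z : x / - x}.
Proof. exact: add_morphN (connDl z). Qed.

Lemma connDr b : {morph D b : x y / x + y}.
Proof. by case: HD => _ /(_ b) /RlinearD. Qed.

Lemma conn0r b : D b 0 = 0.
Proof. exact: add_morph0 (connDr b). Qed.

Lemma connNr b : {morph D b : x / - x}.
Proof. exact: add_morphN (connDr b). Qed.

Lemma conn_leibniz b f a : D b (f *: a) = f *: D b a + rho b f *: a.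
Proof. by case: HD. Qed.

End Connection.

Section Curvature.
Variables (R : numFieldType) (A : comAlgType R) (V : lmodType A).
Variables (n : nat) (e : 'I_n -> V) (phi : 'I_n -> V -> A).
Variables (g : V -> V -> A) (rho : V -> A -> A) (br : V -> V -> V).
Variables (G : V -> V) (D : V -> V -> V).
Hypotheses (Hdb : dual_basis e phi) (HC : is_Courant g rho br).
Hypotheses (HG : is_gen_metric g G) (HD : is_gen_connection g rho D).
Hypothesis HM : is_metric_conn G D.

Let G_lin : Alinear G. Proof. by case: HG. Qed.
Let GK : involutive G. Proof. by case: HG. Qed.
Let GD := AlinearD G_lin.
Let GN := add_morphN GD.

Lemma g_pp_pm x y : g (pp G x) (pm G y) = 0.
Proof.
apply: (@natmul2_inj R A); rewrite /= mulr2n mul0rn.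
have G_sa : g (G (pp G x)) (pm G y) = g (pp G x) (G (pm G y)) by case: HG.
by rewrite -{1}(Gpp G_lin GK x) G_sa (Gpm G_lin GK) (gNr HC) addNr.
Qed.

Lemma R0Dr x y : {morph R0 br D x y : z1 z2 / z1 + z2}.
Proof.
move=> z1 z2; rewrite /R0 !(connDr HD) !opprD.
by rewrite (addrACA (D x (D y z1))) (addrACA (D x (D y z1) - _)).
Qed.

Lemma R0Nr x y : {morph R0 br D x y : z / - z}.
Proof. exact: add_morphN (R0Dr x y). Qed.

Lemma R0Nm x y z : R0 br D x (- y) z = - R0 br D x y z.
Proof. by rewrite /R0 !(connNl HD) (connNr HD) (brNr HC) (connNl HD) !opprD. Qed.

Lemma R0_0l y z : R0 br D 0 y z = 0.
Proof. by rewrite /R0 !(conn0l HD) (br0l HC) (conn0l HD) (conn0r HD) !subrr. Qed.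

Lemma R0_Alinear_l (X : V -> V) y z : Alinear X ->
  (forall c, g (X c) y = 0) -> Alinear (fun c => R0 br D (X c) y z).
Proof.
move=> HX Xy f c c'; rewrite HX /R0 !(connDl HD) !(connZl HD) (connDr HD).
rewrite (conn_leibniz HD) (brDl HC) (br_leibniz_l HC) //.
rewrite !(connDl HD) (connNl HD) !(connZl HD).
(* The two terms rho(y) f *: D_x z cancel; the remaining identity is checked
   after pairing with an arbitrary d, where it becomes a ring identity. *)
by apply: (courant_eq HC) => d; rewrite !(gDl HC, gNl HC, gZl HC); ring.
Qed.

Lemma G_conn_fix x v : G v = v -> G (D x v) = D x v.
Proof. by move=> Gv; have [] := HM x v; rewrite (pp_fix Gv). Qed.

Lemma G_conn_antifix x v : G v = - v -> G (D x v) = - D x v.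
Proof. by move=> Gv; have [_] := HM x v; rewrite (pm_antifix Gv). Qed.

Lemma G_R0_pp x y b : G (R0 br D x y (pp G b)) = R0 br D x y (pp G b).
Proof.
have Gb := Gpp G_lin GK b.
by rewrite /R0 !GD !GN !G_conn_fix.
Qed.

Lemma G_R0_pm x y b : G (R0 br D x y (pm G b)) = - R0 br D x y (pm G b).
Proof.
have Gb := Gpm G_lin GK b.
by rewrite /R0 !GD !GN !G_conn_antifix // !opprD.
Qed.

(* Ric^+_GF(a_-, b_+) and Ric^-_GF(a_+, b_-); the trace over V_+ (resp. V_-)
   is the trace over E of the map precomposed with the projection. *)
Definition RicGFp a b := trace e phi (fun c => R0 br D (pp G c) (pm G a) (pp G b)).
Definition RicGFm a b := trace e phi (fun c => R0 br D (pm G c) (pp G a) (pm G b)).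

Lemma trace_R0_pp_pm_pm a b :
  trace e phi (fun c => R0 br D (pp G c) (pm G a) (pm G b)) = 0.
Proof.
apply: (trace_proj_eq0 Hdb (pm_Alinear G_lin)).
- by apply: R0_Alinear_l; [exact: pp_Alinear | move=> c; rewrite g_pp_pm].
- by move=> c; rewrite pm_antifix // G_R0_pm.
- by move=> c; rewrite pp_antifix ?R0_0l // Gpm.
Qed.

Lemma trace_R0_pm_pp_pp a b :
  trace e phi (fun c => R0 br D (pm G c) (pp G a) (pp G b)) = 0.
Proof.
apply: (trace_proj_eq0 Hdb (pp_Alinear G_lin)).
- apply: R0_Alinear_l; [exact: pm_Alinear | move=> c].
  by rewrite (gC HC) g_pp_pm.
- by move=> c; rewrite pp_fix // G_R0_pp.
- by move=> c; rewrite pm_fix ?R0_0l // Gpp.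
Qed.

Lemma Ric_decomp a b : Ric e phi br D G a b = RicGFp a b + RicGFm a b.
Proof.
rewrite /Ric /Rtot -[in LHS](pp_add_pm G b).
under eq_trace do rewrite !R0Dr.
rewrite (traceD Hdb); congr (_ + _); rewrite (traceD Hdb).
  by rewrite trace_R0_pp_pm_pm addr0.
by rewrite trace_R0_pm_pp_pp add0r.
Qed.

Lemma RicGFp_Gl a b : RicGFp (G a) b = - RicGFp a b.
Proof.
by rewrite /RicGFp -(traceN Hdb); apply: eq_trace => c; rewrite (pmG GK) R0Nm.
Qed.

Lemma RicGFp_Gr a b : RicGFp a (G b) = RicGFp a b.
Proof. by rewrite /RicGFp (ppG GK). Qed.

Lemma RicGFm_Gl a b : RicGFm (G a) b = RicGFm a b.
Proof. by rewrite /RicGFm (ppG GK). Qed.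

Lemma RicGFm_Gr a b : RicGFm a (G b) = - RicGFm a b.
Proof.
by rewrite /RicGFm -(traceN Hdb); apply: eq_trace => c; rewrite (pmG GK) R0Nr.
Qed.

Lemma Ric_Gr a b : Ric e phi br D G a (G b) = - Ric e phi br D G (G a) b.
Proof.
by rewrite !Ric_decomp RicGFp_Gl RicGFp_Gr RicGFm_Gl RicGFm_Gr opprD opprK.
Qed.

Lemma RicGF'E a b : RicGF' e phi br D G a b = - Ric e phi br D G (G a) b.
Proof. by rewrite Ric_decomp RicGFp_Gl RicGFm_Gl opprD opprK. Qed.

Lemma RicGF'_skew_Ric_sym :
  (forall a b, RicGF' e phi br D G a b = - RicGF' e phi br D G b a) <->
  (forall a b, Ric e phi br D G a b = Ric e phi br D G b a).
Proof.
split=> H a b.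
- apply: oppr_inj; have := H (G a) b.
  by rewrite !RicGF'E GK opprK Ric_Gr GK.
- by rewrite !RicGF'E H Ric_Gr.
Qed.

End Curvature.

Theorem lemma4p4 (R : numFieldType) (A : comAlgType R) (V : lmodType A)
  (n : nat) (e : 'I_n -> V) (phi : 'I_n -> V -> A)
  (g : V -> V -> A) (rho : V -> A -> A) (br : V -> V -> V)
  (G : V -> V) (div : V -> A) (D : V -> V -> V) :
  dual_basis e phi ->
  is_Courant g rho br ->
  is_gen_metric g G ->
  is_divergence rho div ->
  is_gen_connection g rho D ->
  is_metric_conn G D ->
  has_divergence e phi D div ->
  pure_type_torsion g br D G ->
  (forall a b, Ric e phi br D G a (G b) = - Ric e phi br D G (G a) b) /\
  ((forall a b, RicGF' e phi br D G a b = - RicGF' e phi br D G b a) <->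
   (forall a b, Ric e phi br D G a b = Ric e phi br D G b a)).
Proof.
move=> Hdb HC HG _ HD HM _ _.
split; first exact: Ric_Gr Hdb HC HG HD HM.
exact: RicGF'_skew_Ric_sym Hdb HC HG HD HM.
Qed.
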